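(* Let $p$ be a prime and let $\alpha\in\mathbf{Bad}$ with $\alpha>0$. Then $\alpha$ satisfies the $p$-adic Littlewood Conjecture, i.e. $m_p(\alpha)=0$, if and only if there is a sequence of natural numbers $\{\ell_m\}_{m\in\mathbb{N}}$ such that, for every $m\in\mathbb{N}$, the number $p^{\ell_m}\alpha$ is not an infinite loop mod $p^m$.
   Context: For $\alpha\in\mathbb{R}$ write its simple continued fraction $[a_0;a_1,a_2,\ldots]$ with $a_0\in\mathbb{Z}$, $a_i\in\mathbb{N}$ for $i\ge1$. Convergents $p_k/q_k=[a_0;a_1,\ldots,a_k]$ are given by $p_{-1}=1,q_{-1}=0,p_0=a_0,q_0=1$, $p_k=a_kp_{k-1}+p_{k-2}$, $q_k=a_kq_{k-1}+q_{k-2}$. For $0\le m\le a_{k+1}$ the $\{k,m\}$-th semi-convergent is $p_{\{k,m\}}/q_{\{k,m\}}=(mp_k+p_{k-1})/(mq_k+q_{k-1})=[a_0;a_1,\ldots,a_k,m]$. For $n\in\mathbb{N}$, a real number $\alpha>0$ is an \emph{infinite loop mod $n$} if none of its semi-convergent denominators $q_{\{k,m\}}$ is divisible by $n$, except $q_{-1}=0$. (For rational $\alpha$ both finite expansions are considered and the expansion is regarded as ending with a partial quotient equal to $\infty$, so that after the last convergent all $m\ge0$ are allowed.) $\|x\|$ denotes the distance from $x$ to the nearest integer, $|\cdot|_p$ the $p$-adic absolute value, $m_p(\alpha)=\inf_{q\in\mathbb{N}} q\,|q|_p\,\|q\alpha\|$, and the $p$-adic Littlewood Conjecture for $\alpha$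 is the statement $m_p(\alpha)=0$. $\mathbf{Bad}=\{\alpha\in\mathbb{R}: \inf_{q\in\mathbb{N}} q\|q\alpha\|>0\}$, equivalently the irrationals with bounded partial quotients. *)

From HB Require Import structures.
From mathcomp Require Import all_boot all_order all_algebra.
From mathcomp Require Import all_classical all_reals.
Set Implicit Arguments. Unset Strict Implicit. Unset Printing Implicit Defensive.
Import Order.TTheory GRing.Theory Num.Theory.
Local Open Scope ring_scope.
Local Open Scope classical_set_scope.

Section CF.
Variable R : realType.

(* Complete quotients of the (Gauss-map) continued fraction algorithm:
   alpha_0 = alpha, alpha_{k+1} = 1 / (alpha_k - floor alpha_k). *)
Fixpoint cf_rem (alpha : R) (k : nat) : R :=
  match k with
  | 0 => alpha
  | k'.+1 => (cf_rem alpha k' - (Num.floor (cf_rem alpha k'))%:~R)^-1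
  end.

Definition cf_a (alpha : R) (k : nat) : int := Num.floor (cf_rem alpha k).

(* shifted denominators: cf_qs alpha (k+1) = q_k, cf_qs alpha 0 = q_{-1} = 0 *)
Fixpoint cf_qs (alpha : R) (j : nat) : int :=
  match j with
  | 0 => 0
  | 1 => 1
  | (j'.+1 as j1).+1 => cf_a alpha j1 * cf_qs alpha j1 + cf_qs alpha j'
  end.

Definition cf_q (alpha : R) (k : nat) : int := cf_qs alpha k.+1.

(* q_{k,m} = m q_k + q_{k-1} *)
Definition semiconv_den (alpha : R) (k m : nat) : int :=
  m%:Z * cf_qs alpha k.+1 + cf_qs alpha k.

(* alpha is an infinite loop mod n: no semi-convergent denominator q_{k,m}
   (k >= 0, 0 <= m <= a_{k+1}) is divisible by n, except q_{0,0} = q_{-1} = 0. *)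
Definition infinite_loop (n : nat) (alpha : R) : Prop :=
  forall k m : nat, (m%:Z <= cf_a alpha k.+1) -> (k, m) <> (0%N, 0%N) ->
    ~ (n%:Z %| semiconv_den alpha k m)%Z.

Definition dist_int (x : R) : R :=
  Num.min (x - (Num.floor x)%:~R) ((Num.floor x)%:~R + 1 - x).

Definition padic_abs (p q : nat) : R := (p%:R) ^- (logn p q).

Definition m_p (p : nat) (alpha : R) : R :=
  inf [set (q%:R * padic_abs p q * dist_int (q%:R * alpha)) | q in [set q : nat | (0 < q)%N]].

Definition Bad : set R :=
  [set alpha | 0 < inf [set (q%:R * dist_int (q%:R * alpha)) | q in [set q : nat | (0 < q)%N]]].

End CF.

From HB Require Import structures.
From mathcomp Require Import all_boot all_order all_algebra.
From mathcomp Require Import all_classical all_reals.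
From mathcomp Require Import zify ring lra.
Import Order.TTheory GRing.Theory Num.Theory.
Local Open Scope ring_scope.
Local Open Scope classical_set_scope.
Set Implicit Arguments. Unset Strict Implicit.

(* The proof uses the continued fraction algorithm of an irrational beta:
   complete quotients r_k, convergents p_k/q_k and their errors
   e_k = q_k beta - p_k, linked by e_k = -r_{k+1} e_{k+1} and
   (q_{k+1} r_{k+1} + q_k) |e_{k+1}| = 1.  These give the two facts we need:
   - every semi-convergent q = q_{k,j} satisfies q ||q beta|| <= r_{k+1},
     whereas a convergent shows c r_{k+1} <= 1 whenever c <= q ||q beta||
     for all q;
   - Legendre's theorem: a reduced c/q with 2q|q beta - c| < 1 has a
     convergent denominator q.
   (<=) If m_p(alpha) = c > 0, the same bound holds for every p^l alpha;
   a semi-convergent divisible by p^m then gives c^2 p^m <= 1, which fails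
   for large m.
   (=>) If m_p(alpha) = 0, a Q with tiny Q |Q|_p ||Q alpha|| reduces to a
   fraction a'/(u p^v); Bad forces v > m, and Legendre applied to
   beta = p^(v-m) alpha makes p^m u a convergent denominator of beta. *)

Section DistInt.
Variable R : realType.
Implicit Types x : R.

Lemma dist_int_ge0 x : 0 <= dist_int x.
Proof.
rewrite /dist_int; have := floor_itv x; rewrite intrD => /andP[h1 h2].
rewrite le_min; apply/andP; split; lra.
Qed.

Lemma dist_int_le x (z : int) : dist_int x <= `|x - z%:~R|.
Proof.
rewrite /dist_int; have := floor_itv x; rewrite intrD => /andP[h1 h2].
rewrite ge_min; case: (lerP z (Num.floor x)) => hz; apply/orP; [left | right].
- have : (z%:~R : R) <= (Num.floor x)%:~R by rewrite ler_int.
  by move=> h; rewrite ger0_norm; lra.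
- have : ((Num.floor x) + 1)%:~R <= (z%:~R : R) by rewrite ler_int; lia.
  by rewrite intrD => h; rewrite ler0_norm; lra.
Qed.

Lemma dist_int_nat x : 0 <= x -> exists a : nat, dist_int x = `|x - a%:R|.
Proof.
move=> x0; rewrite /dist_int; have := floor_itv x; rewrite intrD => /andP[h1 h2].
have : 0 <= Num.floor x by rewrite floor_ge0.
case: (Num.floor x) h1 h2 => [n|n] // h1 h2 _.
case: (lerP (x - n%:R) (n%:R + 1 - x)) => h.
- by exists n; rewrite ger0_norm; lra.
- by exists n.+1; rewrite -natr1 ler0_norm; lra.
Qed.

End DistInt.

Section InfPositiveIntegers.
Variables (R : realType) (f : nat -> R).
Hypothesis f_ge0 : forall q, 0 <= f q.
Let S := [set f q | q in [set q : nat | (0 < q)%N]].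

Let S_has_inf : has_inf S.
Proof. by split; [exists (f 1%N), 1%N | exists 0 => y [q _ <-]]. Qed.

Lemma inf_pos_le q : (0 < q)%N -> inf S <= f q.
Proof. by move=> q0; apply: (ge_inf S_has_inf.2); exists q. Qed.

Lemma inf_pos_ge0 : 0 <= inf S.
Proof. by apply: lb_le_inf; [exact: S_has_inf.1 | move=> y [q _ <-]]. Qed.

Lemma inf_pos_adherent e : 0 < e -> exists2 q, (0 < q)%N & f q < inf S + e.
Proof. by move=> e0; have [y [q q0 <-] hy] := inf_adherent e0 S_has_inf; exists q. Qed.

End InfPositiveIntegers.

Section PAdic.
Variables (R : realType) (p : nat).
Hypothesis p_prime : prime p.

Lemma pexp_gt0 k : (0 : R) < (p ^ k)%:R.
Proof. by rewrite ltr0n expn_gt0 prime_gt0. Qed.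

Lemma padic_weight q : (0 < q)%N -> q%:R * @padic_abs R p q = (q`_p^')%:R.
Proof.
move=> q0; rewrite /padic_abs -{1}(partnC p q0) p_part !natrM natrX.
by rewrite mulrAC mulfV ?mul1r // expf_neq0 // pnatr_eq0 -lt0n prime_gt0.
Qed.

Lemma padic_weight_le q : (0 < q)%N -> q%:R * @padic_abs R p q <= q%:R.
Proof. by move=> q0; rewrite padic_weight // ler_nat dvdn_leq // dvdn_part. Qed.

Lemma padic_weight_pexpM l q : (0 < q)%N ->
  (p ^ l * q)%:R * @padic_abs R p (p ^ l * q) = q%:R * @padic_abs R p q.
Proof.
move=> q0; have pl0 : (0 < p ^ l)%N by rewrite expn_gt0 prime_gt0.
rewrite !padic_weight ?muln_gt0 ?pl0 // partnM // (@part_p'nat p^') ?mul1n //.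
by rewrite pnatNK pnatX pnat_id.
Qed.

Lemma padic_abs_dvd m q : (0 < q)%N -> (p ^ m %| q)%N ->
  @padic_abs R p q <= ((p ^ m)%:R)^-1.
Proof.
move=> q0; rewrite pfactor_dvdn // => hm.
rewrite /padic_abs -natrX lef_pV2 ?posrE ?pexp_gt0 // ler_nat leq_exp2l //.
exact: prime_gt1.
Qed.

End PAdic.

(* Shifted numerators of the convergents: cf_ps alpha (k+1) = p_k and
   cf_ps alpha 0 = p_{-1} = 1, matching the denominators cf_qs. *)
Fixpoint cf_ps (R : realType) (alpha : R) (j : nat) : int :=
  match j with
  | 0 => 1
  | 1 => cf_a alpha 0
  | (j'.+1 as j1).+1 => cf_a alpha j1 * cf_ps alpha j1 + cf_ps alpha j'
  end.

(* No positive integer multiple of beta is an integer, i.e. beta is irrational;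
   this is the form in which irrationality is used below. *)
Definition no_integer_multiple (R : realType) (beta : R) : Prop :=
  forall q : nat, (0 < q)%N -> 0 < dist_int (q%:R * beta).

Lemma switch_off (f : nat -> bool) N : f 1%N -> ~~ f N.+1 ->
  exists n, [/\ (1 <= n)%N, f n & ~~ f n.+1].
Proof.
move=> f1; elim: N => [|N IH] hN; first by rewrite f1 in hN.
by case hf : (f N.+1); [exists N.+1 | apply: IH; rewrite hf].
Qed.

Lemma opposite_coords (A B q x y : int) : 0 <= B -> B <= q -> q < A -> 0 < q ->
  q = x * A + y * B -> (1 <= y /\ x <= 0) \/ (y <= -1 /\ 0 <= x).
Proof.
move=> B0 Bq qA q0 hq; case: (ltrgtP y 0) => hy; [right | left | exfalso].
- by split; [lia | case: (lerP 0 x) => hx //; nia].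
- by split; [lia | case: (lerP x 0) => hx //; nia].
- by move: hq; rewrite hy mul0r addr0 => hq; case: (lerP x 0) => hx; nia.
Qed.

Section ContinuedFraction.
Variables (R : realType) (beta : R).
Local Notation r := (cf_rem beta).
Local Notation a := (cf_a beta).
Local Notation Q := (cf_qs beta).
Local Notation P := (cf_ps beta).

(* The algorithm does not stop at step n: the complete quotient r_n is not an
   integer, so r_{n+1} is a genuine reciprocal. *)
Definition rem_nonint n : bool := (a n)%:~R != r n.
Definition nonint_upto n : Prop := forall j, (j < n)%N -> rem_nonint j.

Lemma frac_rem_itv n : 0 <= r n - (a n)%:~R < 1.
Proof.
have := floor_itv (r n); rewrite intrD /cf_a => /andP[h1 h2].
by apply/andP; split; lra.
Qed.

Lemma rem_ge0 n : 0 <= r n.+1.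
Proof. by rewrite /= invr_ge0; case/andP: (frac_rem_itv n). Qed.

Lemma pq_ge0 n : 0 <= a n.+1.
Proof. by rewrite /cf_a floor_ge0 rem_ge0. Qed.

Lemma rem_recip n : rem_nonint n -> r n.+1 * (r n - (a n)%:~R) = 1.
Proof. by move=> hn; rewrite /= mulVf // subr_eq0 eq_sym. Qed.

Lemma rem_gt1 n : rem_nonint n -> 1 < r n.+1.
Proof.
move=> hn; have /andP[h1 h2] := frac_rem_itv n.
have hpos : 0 < r n - (a n)%:~R by rewrite lt_neqAle h1 andbT eq_sym subr_eq0 eq_sym.
by rewrite /= -[X in X < _]invr1 ltf_pV2 ?posrE.
Qed.

Lemma pq_ge1 n : rem_nonint n -> 1 <= a n.+1.
Proof. by move=> hn; rewrite /cf_a floor_ge_int; have := rem_gt1 hn; lra. Qed.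

Lemma den_ge_upto n : nonint_upto n -> 1 <= Q n.+1 /\ 0 <= Q n.
Proof.
elim: n => [|n IH] hn //.
have [h1 h0] : 1 <= Q n.+1 /\ 0 <= Q n by apply: IH => j hj; apply: hn; lia.
have ha := pq_ge1 (hn n (ltnSn n)).
by split; [change (1 <= a n.+1 * Q n.+1 + Q n); nia | lia].
Qed.

Lemma cf_moebius n : nonint_upto n.+1 ->
  beta * ((Q n.+1)%:~R * r n.+1 + (Q n)%:~R) = (P n.+1)%:~R * r n.+1 + (P n)%:~R.
Proof.
elim: n => [|n IH] hn.
  have h : r 1 * (beta - (a 0)%:~R) = 1 := rem_recip (hn 0%N isT).
  change (beta * ((1:int)%:~R * r 1 + (0:int)%:~R) = (a 0)%:~R * r 1 + (1:int)%:~R).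
  by rewrite mul1r addr0; lra.
have IH' := IH (fun j hj => hn j (ltnW hj)).
have h := rem_recip (hn n.+1 (ltnSn _)).
change (Q n.+2) with (a n.+1 * Q n.+1 + Q n).
change (P n.+2) with (a n.+1 * P n.+1 + P n).
rewrite !intrD !intrM; apply/eqP; rewrite -subr_eq0; apply/eqP.
set r1 := r n.+1 in IH' h *; set r2 := r n.+2 in h *; set A := (a n.+1)%:~R in h *.
have -> : beta * ((A * (Q n.+1)%:~R + (Q n)%:~R) * r2 + (Q n.+1)%:~R)
    - ((A * (P n.+1)%:~R + (P n)%:~R) * r2 + (P n.+1)%:~R)
  = r2 * (beta * ((Q n.+1)%:~R * r1 + (Q n)%:~R) - ((P n.+1)%:~R * r1 + (P n)%:~R))
    - (beta * (Q n.+1)%:~R - (P n.+1)%:~R) * (r2 * (r1 - A) - 1) by ring.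
by rewrite IH' h !subrr mulr0 mulr0 subrr.
Qed.

Lemma det_convergents n : Q n.+1 * P n - P n.+1 * Q n = (-1) ^+ n.
Proof.
elim: n => [|n IH]; first by rewrite /= mul1r mulr0 subr0.
by rewrite exprS -IH [Q n.+2]/= [P n.+2]/=; ring.
Qed.

Definition err n : R := (Q n)%:~R * beta - (P n)%:~R.

Lemma err_rec n : nonint_upto n.+1 -> err n = - r n.+1 * err n.+1.
Proof.
move=> hn; have h := cf_moebius hn; rewrite /err.
apply/eqP; rewrite -subr_eq0; apply/eqP.
rewrite -[RHS](subrr (beta * ((Q n.+1)%:~R * r n.+1 + (Q n)%:~R))) {2}h; ring.
Qed.

Lemma err_det n : nonint_upto n.+1 ->
  ((Q n.+1)%:~R * r n.+1 + (Q n)%:~R) * err n.+1 = ((-1) ^+ n : int)%:~R.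
Proof.
move=> hn; have h := cf_moebius hn; rewrite -det_convergents /err intrD !intrM.
apply/eqP; rewrite -subr_eq0; apply/eqP.
transitivity ((Q n.+1)%:~R * (beta * ((Q n.+1)%:~R * r n.+1 + (Q n)%:~R)
   - ((P n.+1)%:~R * r n.+1 + (P n)%:~R)) : R); first ring.
by rewrite h subrr mulr0.
Qed.

Hypothesis beta_nim : no_integer_multiple beta.

(* For irrational beta the algorithm never stops: if r_n were an integer, then
   by cf_moebius the positive integer q_{n-1} r_n + q_{n-2} times beta would be
   an integer. *)
Lemma nonint_all n : nonint_upto n.
Proof.
elim: n => [|n IH]; first by [].
suff hn : rem_nonint n by move=> j; rewrite ltnS leq_eqVlt => /orP[/eqP->//|]; apply: IH.
apply/negP => /eqP e; case: n IH e => [|n] IH e.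
  have := beta_nim (isT : (0 < 1)%N); rewrite mul1r.
  by have := dist_int_le beta (a 0); rewrite [X in `|_ - X|]e subrr normr0; lra.
have hS := cf_moebius IH; rewrite -e in hS.
have [h1 h0] := den_ge_upto (fun j (hj : (j < n)%N) => IH j (ltnW hj)).
have ha := pq_ge1 (IH n (ltnSn _)).
have : 1 <= Q n.+1 * a n.+1 + Q n by nia.
case hd : (Q n.+1 * a n.+1 + Q n) => [d|d] // d1.
have := beta_nim (_ : (0 < d)%N); rewrite -lez_nat => /(_ d1).
have -> : (d%:R : R) = (Q n.+1)%:~R * (a n.+1)%:~R + (Q n)%:~R.
  by rewrite -intrM -intrD hd.
rewrite mulrC hS.
have := dist_int_le ((P n.+1)%:~R * (a n.+1)%:~R + (P n)%:~R : R) (P n.+1 * a n.+1 + P n).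
by rewrite intrD intrM subrr normr0; lra.
Qed.

Arguments nonint_all : clear implicits.

Lemma rem_nonint_all n : rem_nonint n.
Proof. exact: (nonint_all n.+1 n (ltnSn n)). Qed.

Lemma den_ge1 n : 1 <= Q n.+1.
Proof. by case: (den_ge_upto (nonint_all n)). Qed.

Lemma den_ge0 n : 0 <= Q n.
Proof. by case: (den_ge_upto (nonint_all n)). Qed.

Lemma den_ge_index n : n%:Z <= Q n.+1.
Proof.
suff : n%:Z <= Q n.+1 /\ n.+1%:Z <= Q n.+2 by case.
elim: n => [|n [IH1 IH2]]; first by split => //; have := den_ge1 1.
split => //; change (n.+2%:Z <= a n.+2 * Q n.+2 + Q n.+1).
by have := pq_ge1 (rem_nonint_all n.+1); have := den_ge1 n; nia.
Qed.

Lemma abs_err_det k : ((Q k.+1)%:~R * r k.+1 + (Q k)%:~R) * `|err k.+1| = 1.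
Proof.
have hD : 0 <= ((Q k.+1)%:~R * r k.+1 + (Q k)%:~R : R).
  have := rem_ge0 k; have := den_ge0 k.+1; have := den_ge0 k.
  by rewrite -!(ler0z R) => *; nra.
rewrite -(ger0_norm hD) -normrM err_det; last exact: nonint_all.
by rewrite -signr_odd; case: odd; rewrite ?expr0 ?expr1 ?mulrN1z ?normrN normr1.
Qed.

Lemma conv_err_bound k : (Q k.+1)%:~R * `|err k.+1| * r k.+1 <= 1.
Proof.
rewrite -[X in _ <= X](abs_err_det k).
have h0 : (0:R) <= (Q k)%:~R by rewrite ler0z; apply: den_ge0.
have := mulr_ge0 h0 (normr_ge0 (err k.+1)).
by rewrite mulrDl -mulrA [`|_| * _]mulrC mulrA; lra.
Qed.

Lemma semiconv_err k (j : nat) :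
  (semiconv_den beta k j)%:~R * beta - (j%:Z * P k.+1 + P k)%:~R
    = - (r k.+1 - (j%:Z)%:~R) * err k.+1.
Proof.
transitivity ((j%:Z)%:~R * err k.+1 + err k).
  by rewrite /semiconv_den /err !intrD !intrM; ring.
by rewrite (err_rec (nonint_all k.+1)); ring.
Qed.

(* Every semi-convergent q = q_{k,j} satisfies q ||q beta|| <= r_{k+1}:
   by semiconv_err and abs_err_det,
   q |q beta - p| = (j q_k + q_{k-1}) (r_{k+1} - j) |e_k| <= r_{k+1} - j. *)
Lemma semiconv_dist_le k (j : nat) : j%:Z <= a k.+1 ->
  (semiconv_den beta k j)%:~R * dist_int ((semiconv_den beta k j)%:~R * beta)
    <= r k.+1.
Proof.
move=> hj; have hD := abs_err_det k.
have hq : (0 : R) <= (semiconv_den beta k j)%:~R.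
  by rewrite ler0z /semiconv_den; have := den_ge0 k.+1; have := den_ge0 k; nia.
apply: le_trans (_ : _ * `|_ - (j%:Z * P k.+1 + P k)%:~R| <= _).
  by apply: ler_wpM2l => //; apply: dist_int_le.
have hjr : (j%:Z)%:~R <= r k.+1.
  have : (j%:Z)%:~R <= (a k.+1)%:~R :> R by rewrite ler_int.
  by have := floor_le (r k.+1); rewrite -/(cf_a beta k.+1); lra.
rewrite semiconv_err normrM normrN /semiconv_den intrD intrM.
set jr : R := (j%:Z)%:~R in hjr *; set rr := r k.+1 in hD hjr *.
have jp : 0 <= jr by rewrite /jr ler0z.
rewrite (ger0_norm (_ : 0 <= rr - jr)); last lra.
set q1 := (Q k.+1)%:~R in hD *; set q0 := (Q k)%:~R in hD *.
set e := `|err k.+1| in hD *.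
have q1p : 0 <= q1 by rewrite ler0z; apply: den_ge0.
have q0p : 0 <= q0 by rewrite ler0z; apply: den_ge0.
have ep : 0 <= e by apply: normr_ge0.
have : (jr * q1 + q0) * ((rr - jr) * e) <= (rr * q1 + q0) * ((rr - jr) * e).
  by apply: ler_wpM2r; nra.
have -> : (rr * q1 + q0) * ((rr - jr) * e) = rr - jr by rewrite -[RHS]mulr1 -hD; ring.
lra.
Qed.

Lemma semiconv_den_ge1 k (j : nat) : (k, j) <> (0%N, 0%N) ->
  1 <= semiconv_den beta k j.
Proof.
rewrite /semiconv_den; have := den_ge0 k; have := den_ge1 k.
case: j => [|j] hk1 hk0 hkj; last nia.
by case: k hkj hk1 hk0 => [//|k] _ _ _; rewrite mul0r add0r den_ge1.
Qed.

(* A uniform lower bound c <= q ||q beta|| bounds every complete quotient: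
   c r_{k+1} <= 1, by testing it on the convergent q_k. *)
Lemma lb_rem_bound (c : R) k :
  (forall q : nat, (0 < q)%N -> c <= q%:R * dist_int (q%:R * beta)) ->
  c * r k.+1 <= 1.
Proof.
move=> hc; have hr := conv_err_bound k; have q1 := den_ge1 k.
case hq : (Q k.+1) q1 hr => [q|//] q1 hr.
have q0 : (0 < q)%N by rewrite -lez_nat.
have : c <= q%:R * `|err k.+1|.
  apply: le_trans (hc q q0) _; apply: ler_wpM2l => //.
  by rewrite /err hq; apply: dist_int_le.
by have := rem_ge0 k; have := normr_ge0 (err k.+1); nra.
Qed.

Lemma cf_coords n (q c : int) :
  exists x y, c = x * P n.+1 + y * P n /\ q = x * Q n.+1 + y * Q n.
Proof.
set d := Q n.+1 * P n - P n.+1 * Q n.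
have dd : d * d = 1 by rewrite /d det_convergents -exprD -signr_odd oddD addbb.
exists (- d * (c * Q n - P n * q)), (d * (c * Q n.+1 - q * P n.+1)).
by split; apply/esym; rewrite -[RHS]mulr1 -[in RHS]dd /d; ring.
Qed.

Lemma best_approx n (q c : int) : 0 < q -> Q n <= q -> q < Q n.+1 ->
  `|err n| <= `|q%:~R * beta - c%:~R|.
Proof.
move=> q0 Qq qQ; have [x [y [hc hq]]] := cf_coords n q c.
have rr1 : 1 < r n.+1 := rem_gt1 (rem_nonint_all n).
have hrel := err_rec (nonint_all n.+1).
have -> : q%:~R * beta - c%:~R = ((x%:~R : R) - y%:~R * r n.+1) * err n.+1.
  transitivity ((x%:~R : R) * err n.+1 + y%:~R * err n).
    by rewrite hc hq /err !intrD !intrM; ring.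
  by rewrite hrel; ring.
have hxr : r n.+1 <= `|(x%:~R : R) - y%:~R * r n.+1|.
  case: (opposite_coords (den_ge0 n) Qq qQ q0 hq) => [[h1 h2]|[h1 h2]].
  - have h1' : (1 : R) <= y%:~R by rewrite ler1z.
    have h2' : (x%:~R : R) <= 0 by rewrite -(mulr0z (1:R)) ler_int.
    by rewrite ler0_norm; nra.
  - have h1' : (y%:~R : R) <= -1 by rewrite -mulrN1z ler_int.
    have h2' : (0 : R) <= x%:~R by rewrite ler0z.
    by rewrite ger0_norm; nra.
rewrite hrel !normrM normrN (gtr0_norm (_ : 0 < r n.+1)); last lra.
by apply: ler_wpM2r => //; exact: normr_ge0.
Qed.

(* If q_{n-1} <= q < q_n and 2q |q beta - c| < 1, then c/q = p_{n-1}/q_{n-1}: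
   by best_approx the cross determinant c q_{n-1} - p_{n-1} q has absolute
   value at most q_{n-1} |q beta - c| + q |e_{n-1}| < 1. *)
Lemma close_fraction_eq n (q c : nat) : (0 < q)%N -> Q n <= q%:Z -> q%:Z < Q n.+1 ->
  2 * q%:R * `|q%:R * beta - c%:R| < 1 -> c%:Z * Q n = P n * q%:Z.
Proof.
move=> q0 Qq qQ hlt; apply/eqP; rewrite -subr_eq0; apply/eqP.
set e := (q%:Z)%:~R * beta - (c%:Z)%:~R.
have hEn : `|err n| <= `|e| by apply: best_approx; rewrite ?ltz_nat.
set X := c%:Z * Q n - P n * q%:Z.
have hXlt : `|(X%:~R : R)| < 1.
  have -> : (X%:~R : R) = - (Q n)%:~R * e + (q%:Z)%:~R * err n.
    by rewrite /X /e /err intrD intrM intrN intrM; ring.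
  have hqR : (Q n)%:~R <= ((q%:Z)%:~R : R) by rewrite ler_int.
  have hQR : (0 : R) <= (Q n)%:~R by rewrite ler0z; apply: den_ge0.
  have hlt' : 2 * ((q%:Z)%:~R : R) * `|e| < 1 := hlt.
  have := ler_normD (- (Q n)%:~R * e) ((q%:Z)%:~R * err n).
  rewrite !normrM normrN (ger0_norm hQR) (ger0_norm (_ : 0 <= (q%:Z)%:~R)) ?ler0z //.
  by have := normr_ge0 e; have := normr_ge0 (err n); nra.
have : `|X| < 1 by rewrite -(ltr_int R) intr_norm.
by move: (normr_ge0 X) => ? ?; apply/eqP; rewrite -normr_eq0; lia.
Qed.

(* A reduced fraction c/q equal to p_{n-1}/q_{n-1} has q = q_{n-1}: in the
   unimodular basis its coordinates are (0, y) with y dividing gcd(q, c) = 1. *)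
Lemma reduced_fraction_eq n (q c : nat) : (0 < q)%N -> coprime q c ->
  c%:Z * Q n = P n * q%:Z -> Q n = q%:Z.
Proof.
move=> q0 cop hcross; have [x [y [hc hq]]] := cf_coords n q c.
have x0 : x = 0.
  have : 0 = - x * (-1) ^+ n.
    by rewrite -det_convergents -(subrr (c%:Z * Q n)) {2}hcross hc hq; ring.
  by move=> /eqP; rewrite eq_sym mulf_eq0 signr_eq0 orbF oppr_eq0 => /eqP.
move: hc hq; rewrite x0 !mul0r !add0r => hc hq.
have y_dvd : (`|y|%N %| gcdn q c)%N.
  by rewrite dvdn_gcd -[q]/(`|q%:Z|%N) -[c]/(`|c%:Z|%N) hq hc !abszM !dvdn_mulr.
have y1 : y = 1.
  move: y_dvd; rewrite (eqP cop) dvdn1 => /eqP; have : 0 < q%:Z by rewrite ltz_nat.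
  by rewrite hq; have := den_ge0 n; nia.
by rewrite hq y1 mul1r.
Qed.

(* Since q_0 = 1 <= q < q_{q+1}, some
   q_{n-1} <= q < q_n, and the two previous lemmas apply. *)
Lemma legendre (q c : nat) : (0 < q)%N -> coprime q c ->
  2 * q%:R * `|q%:R * beta - c%:R| < 1 -> exists2 n, (1 <= n)%N & Q n = q%:Z.
Proof.
move=> q0 cop hlt.
have Qq2 : ~~ (Q q.+2 <= q%:Z) by rewrite -ltNge; have := den_ge_index q.+1; lia.
have Q1q : Q 1 <= q%:Z by rewrite lez_nat.
have [n [n1 Qq qQ]] := @switch_off (fun n => Q n <= q%:Z) q.+1 Q1q Qq2.
rewrite -ltNge in qQ; exists n => //.
exact: reduced_fraction_eq q0 cop (close_fraction_eq q0 Qq qQ hlt).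
Qed.

End ContinuedFraction.

Lemma no_integer_multiple_of_lb (R : realType) (w : nat -> R) (c beta : R) : 0 < c ->
  (forall q : nat, (0 < q)%N -> c <= w q * dist_int (q%:R * beta)) ->
  no_integer_multiple beta.
Proof.
move=> c0 hc q q0; rewrite lt_neqAle dist_int_ge0 andbT; apply/eqP => h0.
by have := hc q q0; rewrite -h0 mulr0; lra.
Qed.

(* If beta is irrational and c/q is a good reduced approximation with n | q,
   then q is a convergent denominator, so beta is not an infinite loop mod n. *)
Lemma not_loop_of_approx (R : realType) (beta : R) (n q c : nat) :
  no_integer_multiple beta -> (0 < q)%N -> (n %| q)%N -> coprime q c ->
  2 * q%:R * `|q%:R * beta - c%:R| < 1 -> ~ infinite_loop n beta.
Proof.
move=> beta_nim q0 nq cop hlt hloop.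
have [k k1 hk] := legendre beta_nim q0 cop hlt.
apply: (hloop k 0%N (pq_ge0 beta k)); first by case: k k1 {hk}.
by rewrite /semiconv_den mul0r add0r hk dvdzE.
Qed.

Lemma reduce_approx (R : realType) (p : nat) (alpha : R) (Q a : nat) :
  prime p -> (0 < Q)%N -> exists u v a' : nat,
  [/\ (0 < u)%N, coprime (u * p ^ v) a', u%:R <= Q%:R * @padic_abs R p Q
    & `|(u * p ^ v)%:R * alpha - a'%:R| <= `|Q%:R * alpha - a%:R|].
Proof.
move=> p_prime Q0; set G := gcdn Q a; set Q' := (Q %/ G)%N; set a' := (a %/ G)%N.
have G0 : (0 < G)%N by rewrite gcdn_gt0 Q0.
have hQG : Q = (Q' * G)%N by rewrite divnK // dvdn_gcdl.
have haG : a = (a' * G)%N by rewrite divnK // dvdn_gcdr.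
have Q'0 : (0 < Q')%N by rewrite divn_gt0 // dvdn_leq // dvdn_gcdl.
exists (Q'`_p^')%N, (logn p Q'), a'; split.
- exact: part_gt0.
- rewrite -p_part mulnC partnC // /coprime -(eqn_pmul2r G0) muln_gcdl.
  by rewrite -hQG -haG mul1n.
- rewrite padic_weight // ler_nat dvdn_leq ?part_gt0 // partn_dvd //.
  by rewrite hQG dvdn_mulr.
- have -> : Q%:R * alpha - a%:R = G%:R * (Q'%:R * alpha - a'%:R) :> R.
    by rewrite hQG haG !natrM; ring.
  rewrite -p_part mulnC partnC // normrM ger0_norm //.
  by rewrite ler_peMl ?normr_ge0 // ler1n.
Qed.

Lemma exponent_gap (R : realType) (p m v : nat) (c t : R) : prime p -> 0 < c ->
  c <= (p ^ v)%:R * t -> (p ^ m)%:R * t < c -> (m < v)%N.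
Proof.
move=> p_prime c0 hv hm.
have t0 : 0 < t.
  by rewrite ltNge; apply/negP => t0; have : (0:R) <= (p ^ v)%:R by []; nra.
have : ((p ^ m)%:R : R) < (p ^ v)%:R by rewrite -(ltr_pM2r t0); lra.
by rewrite ltr_nat ltn_exp2l // prime_gt1.
Qed.

Section PAdicLittlewood.
Variables (R : realType) (p : nat).
Hypothesis p_prime : prime p.

Definition padic_product (beta : R) (q : nat) : R :=
  q%:R * @padic_abs R p q * dist_int (q%:R * beta).

Lemma padic_product_ge0 (beta : R) q : 0 <= padic_product beta q.
Proof.
rewrite /padic_product !mulr_ge0 ?dist_int_ge0 ?ler0n //.
by rewrite /padic_abs -natrX invr_ge0 ler0n.
Qed.

Lemma padic_product_le (beta : R) q : (0 < q)%N ->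
  padic_product beta q <= q%:R * dist_int (q%:R * beta).
Proof. by move=> q0; rewrite ler_wpM2r ?dist_int_ge0 ?(padic_weight_le R p_prime q0). Qed.

Lemma mp_ge0 (alpha : R) : 0 <= m_p p alpha.
Proof. exact: (inf_pos_ge0 (padic_product_ge0 alpha)). Qed.

Lemma mp_le (alpha : R) q : (0 < q)%N -> m_p p alpha <= padic_product alpha q.
Proof. exact: (inf_pos_le (padic_product_ge0 alpha)). Qed.

Lemma mp_adherent (alpha e : R) : 0 < e ->
  exists2 q, (0 < q)%N & padic_product alpha q < m_p p alpha + e.
Proof. exact: (inf_pos_adherent (padic_product_ge0 alpha)). Qed.

(* A lower bound for the products of alpha persists for p^l alpha, since
   q (p^l alpha) = (p^l q) alpha and (p^l q) |p^l q|_p = q |q|_p. *)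
Lemma padic_product_scale (alpha c : R) l :
  (forall q, (0 < q)%N -> c <= padic_product alpha q) ->
  forall q, (0 < q)%N -> c <= padic_product ((p ^ l)%:R * alpha) q.
Proof.
move=> hc q q0; have := hc (p ^ l * q)%N; rewrite muln_gt0 expn_gt0 prime_gt0 // q0.
rewrite /padic_product (padic_weight_pexpM R p_prime) // natrM => /(_ isT).
by rewrite mulrA [_ * (p ^ l)%:R]mulrC.
Qed.

Lemma pexp_unbounded (x : R) : exists2 m, (0 < m)%N & x < (p ^ m)%:R.
Proof.
exists (Num.truncn x).+1 => //; apply: lt_le_trans (truncnS_gt x) _.
by rewrite ler_nat ltnW // ltn_expl // prime_gt1.
Qed.

(* Core of the paper's criterion: if c bounds all p-adic products of beta from
   below and beta is not an infinite loop mod p^m, then c^2 p^m <= 1.  A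
   semi-convergent q divisible by p^m gives c <= p^-m r_{k+1}, while the
   convergents give c r_{k+1} <= 1. *)
Lemma finite_loop_bound (beta c : R) m : 0 < c ->
  (forall q, (0 < q)%N -> c <= padic_product beta q) ->
  ~ infinite_loop (p ^ m) beta -> c * c * (p ^ m)%:R <= 1.
Proof.
move=> c0 hc hloop; rewrite leNgt; apply/negP => big; apply: hloop => k j hj hkj hdiv.
have hplain q : (0 < q)%N -> c <= q%:R * dist_int (q%:R * beta).
  by move=> q0; apply: le_trans (hc q q0) (padic_product_le _ q0).
have beta_nim := no_integer_multiple_of_lb c0 hplain.
have hr := lb_rem_bound beta_nim k hplain.
have hsemi := semiconv_dist_le beta_nim hj.
case hq : (semiconv_den beta k j) (semiconv_den_ge1 beta_nim hkj) hsemi hdiv => [q|//] q1.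
have q0 : (0 < q)%N by rewrite -lez_nat.
rewrite dvdzE /= => hsemi pq.
have hpm := pexp_gt0 R p_prime m.
have hcq : c <= ((p ^ m)%:R)^-1 * cf_rem beta k.+1.
  apply: le_trans (hc q q0) _; rewrite /padic_product mulrAC mulrC.
  apply: ler_pM => //; rewrite ?mulr_ge0 ?dist_int_ge0 // ?(padic_abs_dvd R p_prime) //.
  by rewrite /padic_abs -natrX invr_ge0.
have hr0 := rem_ge0 beta k.
have : c * c <= ((p ^ m)%:R)^-1.
  have s0 : 0 < ((p ^ m)%:R : R)^-1 by rewrite invr_gt0.
  move: hcq hr hr0 s0; set s := _^-1; set rk := cf_rem _ _ => *; nra.
by rewrite -(ler_pM2r hpm) mulVf ?gt_eqF //; lra.
Qed.

(* (<=) If p^(l m) alpha is never an infinite loop mod p^m, then m_p(alpha) = 0: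
   otherwise c = m_p(alpha) > 0 bounds all products of p^(l m) alpha and
   finite_loop_bound gives c^2 p^m <= 1 for every m. *)
Lemma mp_zero_of_finite_loops (alpha : R) :
  (exists l : nat -> nat, forall m : nat, (0 < m)%N ->
     ~ infinite_loop (p ^ m) ((p ^ l m)%:R * alpha)) -> m_p p alpha = 0.
Proof.
move=> [l hl]; apply/eqP; rewrite eq_le mp_ge0 andbT leNgt; apply/negP => c0.
set c := m_p p alpha in c0 *; have cc0 : 0 < c * c by rewrite mulr_gt0.
have [m m0] := pexp_unbounded (c * c)^-1.
rewrite -(ltr_pM2l cc0) mulfV ?gt_eqF // => hm.
have hc := padic_product_scale (l m) (mp_le alpha).
by have := finite_loop_bound c0 hc (hl m m0); lra.
Qed.

Lemma small_reduced_approx (alpha e : R) : 0 < alpha -> m_p p alpha = 0 -> 0 < e ->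
  exists u v a' : nat, [/\ (0 < u)%N, coprime (u * p ^ v) a'
    & u%:R * `|(u * p ^ v)%:R * alpha - a'%:R| < e].
Proof.
move=> alpha0 mp0 e0; have [Q Q0] := mp_adherent alpha e0; rewrite mp0 add0r => hQ.
have [a ha] := dist_int_nat (mulr_ge0 (ler0n R Q) (ltW alpha0)).
have [u [v [a' [u0 cop hu hred]]]] := reduce_approx alpha a p_prime Q0.
exists u, v, a'; split => //; apply: le_lt_trans hQ.
by rewrite /padic_product ha; apply: ler_pM => //; rewrite normr_ge0.
Qed.

Lemma scaled_no_integer_multiple (alpha c : R) (N : nat) : 0 < c -> (0 < N)%N ->
  (forall q, (0 < q)%N -> c <= q%:R * dist_int (q%:R * alpha)) ->
  no_integer_multiple (N%:R * alpha).
Proof.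
move=> c0 N0 hc; apply: (@no_integer_multiple_of_lb _ (fun q => (N * q)%:R) c) => // q q0.
by have := hc (N * q)%N; rewrite muln_gt0 N0 q0 natrM mulrA [q%:R * _]mulrC => /(_ isT).
Qed.

(* (=>) If m_p(alpha) = 0, then for each m a reduced fraction
   a'/(u p^v) with u |u p^v alpha - a'| tiny exists; Bad forces v > m, and
   for beta = p^(v-m) alpha the denominator p^m u is, by Legendre, a
   convergent denominator divisible by p^m. *)
Lemma finite_loops_of_mp_zero (alpha : R) : Bad alpha -> 0 < alpha ->
  m_p p alpha = 0 ->
  exists l : nat -> nat, forall m : nat, (0 < m)%N ->
     ~ infinite_loop (p ^ m) ((p ^ l m)%:R * alpha).
Proof.
move=> bad alpha0 mp0.
set cB := inf [set q%:R * dist_int (q%:R * alpha) | q in [set q : nat | (0 < q)%N]].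
have cB0 : 0 < cB := bad.
have hB q : (0 < q)%N -> cB <= q%:R * dist_int (q%:R * alpha).
  exact: (inf_pos_le (fun q => mulr_ge0 (ler0n _ q) (dist_int_ge0 _))).
suff H m : exists l, (0 < m)%N -> ~ infinite_loop (p ^ m) ((p ^ l)%:R * alpha).
  by have [l hl] := choice H; exists l.
have hpm := pexp_gt0 R p_prime m.
set d := Num.min cB 2^-1; have d0 : 0 < d by rewrite lt_min cB0 invr_gt0 ltr0n.
have dcB : d <= cB by rewrite ge_min lexx.
have d2 : d <= 2^-1 by rewrite ge_min lexx orbT.
have [u [v [a' [u0 cop]]]] := small_reduced_approx alpha0 mp0 (divr_gt0 d0 hpm).
set t := u%:R * `|(u * p ^ v)%:R * alpha - a'%:R|; rewrite ltr_pdivlMr // mulrC => hmt.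
have mv : (m < v)%N.
  apply: (exponent_gap p_prime cB0 _ (lt_le_trans hmt dcB)).
  have Q'0 : (0 < u * p ^ v)%N by rewrite muln_gt0 u0 expn_gt0 prime_gt0.
  apply: le_trans (hB _ Q'0) _.
  have -> : (p ^ v)%:R * t = (u * p ^ v)%:R * `|(u * p ^ v)%:R * alpha - a'%:R|.
    by rewrite /t natrM; ring.
  rewrite ler_pM2l ?ltr0n //.
  by have := dist_int_le ((u * p ^ v)%:R * alpha) a'; rewrite -pmulrn.
exists (v - m)%N => _; set beta := (p ^ (v - m))%:R * alpha.
have hqb : (p ^ m * u)%:R * beta = (u * p ^ v)%:R * alpha.
  by rewrite /beta -{2}(subnKC (ltnW mv)) expnD !natrM; ring.
apply: (@not_loop_of_approx _ _ _ (p ^ m * u) a').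
- by apply: (scaled_no_integer_multiple cB0 _ hB); rewrite expn_gt0 prime_gt0.
- by rewrite muln_gt0 expn_gt0 prime_gt0.
- exact: dvdn_mulr.
- apply: coprime_dvdl cop; rewrite mulnC; apply: dvdn_mul => //.
  by rewrite dvdn_exp2l ?prime_gt1 // ltnW.
- by rewrite hqb natrM -!mulrA -/t; lra.
Qed.

End PAdicLittlewood.

Unset Implicit Arguments.

Theorem theorem3p1 (R : realType) (p : nat) (alpha : R) :
  prime p -> Bad alpha -> 0 < alpha ->
  (m_p p alpha = 0 <->
   exists l : nat -> nat, forall m : nat, (0 < m)%N ->
     ~ infinite_loop (p ^ m) ((p ^ l m)%:R * alpha)).
Proof.
move=> p_prime bad alpha0; split.
- exact: finite_loops_of_mp_zero.
- exact: mp_zero_of_finite_loops.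
Qed.
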